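(* In the standard LLP setup, suppose $K^\uparrow\neq\emptyset$. If $N_{mcf\bar c}$ is defined and $N\ge N_{mcf\bar c}+1$, then $L(G,\gamma^N_{optm})=\overline{K^\uparrow}$.
   Context: Standard LLP setup. $\Sigma=\Sigma_c\,\dot\cup\,\Sigma_{uc}$ is a finite alphabet partitioned into controllable and uncontrollable events. The plant $G$ has generated language $L(G)$ and marked language $L_m(G)$ with $L(G)=\overline{L_m(G)}$ ($\overline{M}$ = set of prefixes of strings in $M$). The legal language $K\subseteq L_m(G)$ satisfies $K=\overline{K}\cap L_m(G)$ ($K$ need not be prefix-closed). For a prefix-closed $L$, $M$ is controllable w.r.t. $L$ if $\overline{M}\Sigma_{uc}\cap L\subseteq\overline{M}$; $K^\uparrow$ is the supremal sublanguage of $K$ controllable w.r.t. $L(G)$. For a language $L$ and $s\in\Sigma^*$: $L/s=\{t: st\in L\}$; $L|_N=\{t\in L:|t|\le N\}$; $\Sigma_{L(G)}(s)=\{\sigma\in\Sigma: s\sigma\in L(G)\}$. $M^{\uparrow/s|_N}$ is the supremal sublanguage of $M$ controllable w.r.t. $L(G)/s|_N$. Optimistic attitude: $f^N_{optm}(s)=[K/s|_N\cup(\overline{K}/s|_N\setminus\overline{K}/s|_{N-1})]^{\uparrow/s|_N}$; control policy $\gamma^N_{optm}(s)=(\overline{f^N_{optm}(s)}\cap\Sigma)\cup(\Sigma_{uc}\cap\Sigma_{L(G)}(s))$. Closed-loop language $L(G,\gamma)$: $\epsilon\in L(G,\gamma)$, and $s\sigma\in L(G,\gamma)$ iff $s\in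 L(G,\gamma)$, $s\sigma\in L(G)$, $\sigma\in\gamma(s)$. Define $L_c(G)=\{s\in L(G): s\sigma\notin L(G)\ \forall\sigma\in\Sigma_{uc}\}$, $K_{mc}=K\cap L_c(G)$, and $K_{f\bar c}=\{s\in\overline{K}: \exists\sigma\in\Sigma_{uc},\ s\sigma\in L(G)\setminus\overline{K}\}$. Then $N_{mcf\bar c}=\max\{|t|: \exists s\in K_{mc}\cup\{\epsilon\},\ st\in K_{f\bar c}\text{ and } sv\notin K_{f\bar c}\cup K_{mc}\text{ for every nonempty proper prefix } v \text{ of } t\}$ if this maximum exists; otherwise undefined. *)

From mathcomp Require Import all_boot.
Set Implicit Arguments. Unset Strict Implicit. Unset Printing Implicit Defensive.

Section LLP.
Variable Sigma : finType.

Definition lang := seq Sigma -> Prop.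

Definition subl (M1 M2 : lang) : Prop := forall s, M1 s -> M2 s.

Definition pref (M : lang) : lang := fun s => exists t, M (s ++ t).

Definition quot (L : lang) (s : seq Sigma) : lang := fun t => L (s ++ t).

Definition trunc (L : lang) (N : nat) : lang := fun t => L t /\ size t <= N.

Definition controllable (uc : pred Sigma) (M L : lang) : Prop :=
  forall s sigma, pref M s -> uc sigma -> L (rcons s sigma) -> pref M (rcons s sigma).

Definition supC (uc : pred Sigma) (M L : lang) : lang :=
  fun s => exists M', subl M' M /\ controllable uc M' L /\ M' s.

(* optimistic attitude f^N_optm(s); L = L(G), K = legal language *)
Definition f_optm (uc : pred Sigma) (L K : lang) (N : nat) (s : seq Sigma) : lang :=
  supC uc
    (fun t => trunc (quot K s) N t \/
              (trunc (quot (pref K) s) N t /\ ~ trunc (quot (pref K) s) N.-1 t))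
    (trunc (quot L s) N).

Definition gamma_optm (uc : pred Sigma) (L K : lang) (N : nat)
  (s : seq Sigma) (sigma : Sigma) : Prop :=
  pref (f_optm uc L K N s) [:: sigma] \/ (uc sigma /\ L (rcons s sigma)).

Inductive closed_loop (L : lang) (gamma : seq Sigma -> Sigma -> Prop) : lang :=
| CL_nil : closed_loop L gamma [::]
| CL_step s sigma : closed_loop L gamma s -> L (rcons s sigma) -> gamma s sigma ->
    closed_loop L gamma (rcons s sigma).

Definition Lc (uc : pred Sigma) (L : lang) : lang :=
  fun s => L s /\ forall sigma, uc sigma -> ~ L (rcons s sigma).

Definition K_mc (uc : pred Sigma) (L K : lang) : lang := fun s => K s /\ Lc uc L s.

Definition K_fc (uc : pred Sigma) (L K : lang) : lang :=
  fun s => pref K s /\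
    exists sigma, uc sigma /\ L (rcons s sigma) /\ ~ pref K (rcons s sigma).

(* the set of lengths |t| over which the max N_{mcf\bar c} is taken *)
Definition Nmcf_set (uc : pred Sigma) (L K : lang) (n : nat) : Prop :=
  exists s t, (K_mc uc L K s \/ s = [::]) /\ K_fc uc L K (s ++ t) /\
    (forall v w, t = v ++ w -> v <> [::] -> w <> [::] ->
        ~ (K_fc uc L K (s ++ v) \/ K_mc uc L K (s ++ v))) /\
    size t = n.

(* "N_{mcf\bar c} is defined and equals Nm": Nm is the maximum of that set *)
Definition is_Nmcf (uc : pred Sigma) (L K : lang) (Nm : nat) : Prop :=
  Nmcf_set uc L K Nm /\ forall n, Nmcf_set uc L K n -> n <= Nm.

End LLP.

From mathcomp Require Import all_boot zify.
From Stdlib Require Import Classical.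
Set Implicit Arguments. Unset Strict Implicit. Unset Printing Implicit Defensive.

(* Write L = pref Lm and Kup = supC uc K L.
   - "Kup-prefixes are enabled": if s·a is a prefix of Kup, the horizon
     language of s (extensions of s inside pref Kup, of length at most N,
     ending in Kup or of length exactly N) is a controllable sublanguage of
     the optimistic target at s, so a belongs to gamma(s).
   - "enabled events stay in Kup": a controllable event a at s in pref Kup
     is the first letter of a word of some controllable sublanguage M' of
     the target.  The words s·t of K guided by M' during the first N steps,
     and meeting no intermediate K_mc string, form together with Kup a
     controllable sublanguage J of K; hence pref J ⊆ pref Kup and s·a lies
     in pref Kup.  The heart of the matter is that guided words never reach
     K_fc: the first K_fc string after the last K_mc prefix of s is either
     within the horizon, where controllability of M' forbids it, or more
     than Nm steps after a K_mc string, contradicting maximality of Nm. *)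

Lemma least_witness (P : nat -> Prop) n :
  P n -> exists k, P k /\ forall j, j < k -> ~ P j.
Proof.
elim/ltn_ind: n => n IH Pn.
case: (classic (exists j, j < n /\ P j)) => [[j [ltjn Pj]]|noj].
  exact: IH ltjn Pj.
by exists n; split=> // j ltjn Pj; apply: noj; exists j.
Qed.

Section Prefixes.
Variable Sigma : finType.
Implicit Types (M : lang Sigma) (x y s t z : seq Sigma).

Lemma pref_cat M x y : pref M (x ++ y) -> pref M x.
Proof. by case=> t H; exists (y ++ t); rewrite catA. Qed.

Lemma pref_self M x : M x -> pref M x.
Proof. by move=> H; exists [::]; rewrite cats0. Qed.

Lemma pref_take M x n : pref M x -> pref M (take n x).
Proof. by move=> H; apply: (pref_cat (y := drop n x)); rewrite cat_take_drop. Qed.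

Lemma cat_prefix_cases x z s t : x ++ z = s ++ t ->
  (exists w, s = x ++ w) \/ x = s ++ take (size x - size s) t.
Proof.
move=> E; case: (leqP (size x) (size s)) => H.
  left; exists (take (size s - size x) z).
  have := congr1 (take (size s)) E.
  by rewrite take_cat ltnNge H /= takel_cat // take_size => ->.
right; have := congr1 (take (size x)) E.
by rewrite takel_cat // take_size take_cat ltnNge (ltnW H).
Qed.

End Prefixes.

Section Supremal.
Variables (Sigma : finType) (uc : pred Sigma) (M L : lang Sigma).

Lemma supC_controllable : controllable uc (supC uc M L) L.
Proof.
move=> s a [t [M' [HM' [HC HMst]]]] Ha HL.
have [t' Ht'] : pref M' (rcons s a) by apply: HC => //; exists t.
by exists t', M'.
Qed.

Lemma supC_greatest (M' : lang Sigma) :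
  subl M' M -> controllable uc M' L -> forall x, pref M' x -> pref (supC uc M L) x.
Proof. by move=> HM' HC x [t Ht]; exists t, M'. Qed.

Lemma supC_sub : subl (supC uc M L) M.
Proof. by move=> x [M' [HM' [_ Hx]]]; apply: HM'. Qed.

Lemma supC_pref x : pref (supC uc M L) x -> pref M x.
Proof. by case=> t /supC_sub Ht; exists t. Qed.

End Supremal.

Section LLP.
Variables (Sigma : finType) (uc : pred Sigma) (Lm K : lang Sigma).
Notation L := (pref Lm).
Notation Kup := (supC uc K (pref Lm)).
Notation Kmc := (K_mc uc (pref Lm) K).
Notation Kfc := (K_fc uc (pref Lm) K).

Definition target (N : nat) (s : seq Sigma) : lang Sigma :=
  fun t => trunc (quot K s) N t \/
           (trunc (quot (pref K) s) N t /\ ~ trunc (quot (pref K) s) N.-1 t).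

Lemma Kup_not_fc x : pref Kup x -> ~ Kfc x.
Proof.
move=> Hx [_ [a [Ha [HL HnK]]]]; apply: HnK.
by apply: (@supC_pref _ uc K L); apply: supC_controllable.
Qed.

Lemma last_mc_decomp s : exists s0 r, s = s0 ++ r /\ (Kmc s0 \/ s0 = [::]) /\
  forall k, 0 < k <= size r -> ~ Kmc (s0 ++ take k r).
Proof.
elim/last_ind: s => [|s a [s0 [r [-> [Hs0 Hr]]]]].
  by exists [::], [::]; split=> //; split=> [|k /=]; [right | lia].
case: (classic (Kmc (rcons (s0 ++ r) a))) => Hmc.
  exists (rcons (s0 ++ r) a), [::]; rewrite cats0.
  by split=> //; split=> [|k /=]; [left | lia].
exists s0, (rcons r a); rewrite rcons_cat; split=> //; split=> // k.
rewrite size_rcons => Hk; case: (leqP k (size r)) => Hkr.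
  by rewrite -cats1 takel_cat //; apply: Hr; lia.
by rewrite take_oversize ?size_rcons // -rcons_cat.
Qed.

Lemma Nmcf_witness s0 u : (Kmc s0 \/ s0 = [::]) -> Kfc (s0 ++ u) ->
  (forall j, 0 < j < size u -> ~ Kfc (s0 ++ take j u) /\ ~ Kmc (s0 ++ take j u)) ->
  Nmcf_set uc L K (size u).
Proof.
move=> Hs0 Hfc Hinner; exists s0, u; split=> //; split=> //; split=> //.
move=> v w Euvw Hv Hw.
have Hv0 : 0 < size v by case: v Hv {Euvw}.
have Hw0 : 0 < size w by case: w Hw {Euvw}.
have Hvu : 0 < size v < size u by rewrite Euvw size_cat; lia.
have [] := Hinner _ Hvu; rewrite Euvw take_size_cat //.
by move=> Hnfc Hnmc [].
Qed.

Section Horizon.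
Variables (N : nat) (p : seq Sigma).
Hypothesis N_gt0 : 0 < N.

Definition horizon (t : seq Sigma) : Prop :=
  pref Kup (p ++ t) /\ size t <= N /\ (Kup (p ++ t) \/ size t = N).

Lemma horizon_ext u : pref Kup (p ++ u) -> size u <= N -> exists v, horizon (u ++ v).
Proof.
case=> z Hz Hu; case: (leqP (size (u ++ z)) N) => Hs.
  by rewrite -catA in Hz; exists z; split; [exact: pref_self|split=> //; left].
rewrite size_cat in Hs; exists (take (N - size u) z); split.
  by exists (drop (N - size u) z); rewrite -!catA cat_take_drop catA.
by rewrite size_cat size_take_min; split; [lia | right; lia].
Qed.

Lemma horizon_controllable : controllable uc horizon (trunc (quot L p) N).
Proof.
move=> u a [v [Hv _]] Ha [HL Hsz].
have Hu : pref Kup (p ++ u) by apply: (pref_cat (y := v)); rewrite -catA.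
have : pref Kup (p ++ rcons u a).
  by rewrite -rcons_cat; apply: (@supC_controllable _ uc K L) => //; rewrite rcons_cat.
by move/horizon_ext => /(_ Hsz) [w Hw]; exists w.
Qed.

Lemma horizon_target : subl horizon (target N p).
Proof.
move=> t [Hpref [Hsz [HK|HN]]]; first by left; split=> //; exact: supC_sub HK.
right; split; first by split=> //; exact: supC_pref Hpref.
by case=> _; lia.
Qed.

Lemma Kup_enabled a : pref Kup (rcons p a) -> gamma_optm uc L K N p a.
Proof.
move=> Hpa; left.
have Hpa' : pref Kup (p ++ [:: a]) by rewrite cats1.
have [v Hv] := horizon_ext Hpa' N_gt0.
exists v, horizon; split; [exact: horizon_target | split=> //].
exact: horizon_controllable.
Qed.

End Horizon.

Section Guided.
Variables (Nm N : nat) (s : seq Sigma) (M' : lang Sigma).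
Hypothesis HNm : is_Nmcf uc L K Nm.
Hypothesis HN : Nm + 1 <= N.
Hypothesis Hs : pref Kup s.
Hypothesis HMsub : subl M' (target N s).
Hypothesis HMc : controllable uc M' (trunc (quot L s) N).

Definition guided (t : seq Sigma) : Prop := forall n, n <= N -> pref M' (take n t).

Definition no_inner_mc (t : seq Sigma) : Prop :=
  forall n, 0 < n < size t -> ~ Kmc (s ++ take n t).

Definition legal_guided (y : seq Sigma) : Prop :=
  exists t, y = s ++ t /\ K y /\ guided t /\ no_inner_mc t.

Lemma guided_of_pref t : pref M' t -> guided t.
Proof. by move=> Ht n _; apply: pref_take. Qed.

Lemma guided_take m t : guided t -> guided (take m t).
Proof. by move=> Ht n Hn; rewrite -take_min; apply: Ht; lia. Qed.

Lemma guided_cat t w : guided t -> N <= size t -> guided (t ++ w).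
Proof. by move=> Ht HtN n Hn; rewrite takel_cat; [apply: Ht | lia]. Qed.

Lemma no_inner_mc_take m t : no_inner_mc t -> no_inner_mc (take m t).
Proof.
move=> Ht n; rewrite size_take_min => Hn.
by rewrite take_takel; [apply: Ht | ]; lia.
Qed.

Lemma no_inner_mc_rcons t a : no_inner_mc t -> ~ Kmc (s ++ t) -> no_inner_mc (rcons t a).
Proof.
move=> Ht Hst n; rewrite size_rcons -cats1 => Hn.
case: (ltnP n (size t)) => Hnt; first by rewrite takel_cat; [apply: Ht | ]; lia.
have -> : n = size t by lia.
by rewrite take_size_cat.
Qed.

Lemma target_pref_K t : pref M' t -> pref K (s ++ t).
Proof.
case=> v /HMsub [[HK _]|[[HK _] _]]; rewrite /quot catA in HK.
  exact: pref_cat (pref_self HK).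
exact: pref_cat HK.
Qed.

(* Within the horizon, controllability of M' forbids leaving pref K by an
   uncontrollable event. *)
Lemma not_fc_within_horizon u : pref M' u -> size u < N -> ~ Kfc (s ++ u).
Proof.
move=> Hu Hsz [_ [a [Ha [HLa HnK]]]]; apply: HnK.
rewrite rcons_cat; apply: target_pref_K; apply: HMc => //.
by split; [rewrite /quot -rcons_cat | rewrite size_rcons].
Qed.

Lemma guided_not_fc t : guided t -> no_inner_mc t -> ~ Kfc (s ++ t).
Proof.
move=> Hg Hmc Hfc.
have [s0 [r [Es [Hs0 Hr]]]] := last_mc_decomp s.
pose first_fc k := k <= size (r ++ t) /\ Kfc (s0 ++ take k (r ++ t)).
have [k [[HkT Hk] Hmin]] : exists k, first_fc k /\ forall j, j < k -> ~ first_fc j.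
  by apply: (@least_witness _ (size (r ++ t))); rewrite /first_fc take_size catA -Es.
rewrite size_cat in HkT.
case: (leqP k (size r)) => Hkr.
  apply: (@Kup_not_fc (s0 ++ take k r)); last by rewrite takel_cat in Hk.
  by apply: (pref_cat (y := drop k r)); rewrite -catA cat_take_drop -Es.
have Ek : forall j, size r <= j ->
    s0 ++ take j (r ++ t) = s ++ take (j - size r) t.
  by move=> j Hj; rewrite take_cat ltnNge Hj /= catA -Es.
case: (ltnP (k - size r) N) => HkN.
  apply: (@not_fc_within_horizon (take (k - size r) t)); first by apply: Hg; lia.
    by rewrite size_take_min; lia.
  by rewrite -Ek //; lia.
have : Nmcf_set uc L K (size (take k (r ++ t))).
  apply: (Nmcf_witness Hs0 Hk) => j; rewrite size_take_min => Hj.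
  rewrite take_takel; last lia.
  split; first by move=> Hfcj; apply: (Hmin j); [lia | split; [lia | ]].
  case: (leqP j (size r)) => Hjr; first by rewrite takel_cat //; apply: Hr; lia.
  by rewrite Ek; [apply: Hmc | ]; lia.
by move/(proj2 HNm); rewrite size_take_min size_cat; lia.
Qed.

Lemma guided_extends_to_K q : guided q -> pref K (s ++ q) ->
  exists w, guided (q ++ w) /\ K (s ++ q ++ w).
Proof.
move=> Hq HK; case: (ltnP (size q) N) => HqN; last first.
  by case: HK => w; rewrite -catA => Hw; exists w; split=> //; apply: guided_cat.
have [v Hv] : pref M' q by rewrite -(take_size q); apply: Hq; lia.
case: (HMsub Hv) => [[HKv _]|[[HpK _] Hnot]].
  by exists v; split=> //; apply: guided_of_pref; apply: pref_self.
have HvN : N <= size (q ++ v).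
  by case: (leqP N (size (q ++ v))) => // H; exfalso; apply: Hnot; split=> //; lia.
case: HpK => w Hw; exists (v ++ w); rewrite catA; split; last by rewrite /quot -!catA in Hw *.
by apply: guided_cat => //; apply: guided_of_pref; apply: pref_self.
Qed.

(* Cutting a guided word of K at its first K_mc point beyond q yields a
   legal guided word extending s·q. *)
Lemma cut_at_first_mc q w : guided (q ++ w) -> no_inner_mc q -> K (s ++ q ++ w) ->
  pref legal_guided (s ++ q).
Proof.
set e := q ++ w => He Hq HKe.
pose stop n := size q <= n <= size e /\ (n = size e \/ (0 < n /\ Kmc (s ++ take n e))).
have [n [[Hn Hstop] Hmin]] : exists n, stop n /\ forall j, j < n -> ~ stop j.
  by apply: (@least_witness _ (size e)); split; [rewrite size_cat; lia | left].
have Hsn : size (take n e) = n by rewrite size_take_min; lia.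
have Eq : take (size q) (take n e) = q by rewrite take_takel ?take_size_cat //; lia.
exists (drop (size q) (take n e)); rewrite -catA -{1}Eq cat_take_drop.
exists (take n e); split=> //; split.
  by case: Hstop => [->|[_ []]] //; rewrite take_size.
split; first exact: guided_take.
move=> j; rewrite Hsn => Hj; rewrite take_takel; last lia.
case: (ltnP j (size q)) => Hjq; first by rewrite takel_cat; [apply: Hq | ]; lia.
by move=> Hmcj; apply: (Hmin j); [lia | split; [lia | right; split; [lia | ]]].
Qed.

Lemma guided_ext q : guided q -> no_inner_mc q -> pref K (s ++ q) ->
  pref legal_guided (s ++ q).
Proof.
move=> Hg Hmc HK; have [w [Hgw HKw]] := guided_extends_to_K Hg HK.
exact: cut_at_first_mc Hgw Hmc HKw.
Qed.

Definition J (y : seq Sigma) : Prop := Kup y \/ legal_guided y.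

Lemma J_sub : subl J K.
Proof. by move=> y [/supC_sub|[t [_ []]]]. Qed.

Lemma J_of_Kup x : pref Kup x -> pref J x.
Proof. by case=> v Hv; exists v; left. Qed.

Lemma legal_guided_controllable x a :
  pref legal_guided x -> uc a -> L (rcons x a) -> pref J (rcons x a).
Proof.
move=> [z [t [Ey [HK [Hgt Hmct]]]]] Ha HL.
case: (cat_prefix_cases Ey) => [[w Ew]|Ex].
  apply: J_of_Kup; apply: (@supC_controllable _ uc K L) => //.
  by apply: (pref_cat (y := w)); rewrite -Ew.
set q := take _ t in Ex.
have Hgq : guided q := guided_take _ Hgt.
have Hnmc : ~ Kmc x by case=> _ [_ Hc]; exact: Hc Ha HL.
have HKa : pref K (rcons x a).
  apply: NNPP => Hn; apply: (@guided_not_fc q) => //; first exact: no_inner_mc_take.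
  by rewrite -Ex; split; [exists z | exists a].
have Hgqa : guided (rcons q a).
  case: (ltnP (size q) N) => HqN; last by rewrite -cats1; apply: guided_cat.
  apply: guided_of_pref; apply: HMc => //; first by rewrite -(take_size q); apply: Hgq; lia.
  by split; [rewrite /quot -rcons_cat -Ex | rewrite size_rcons].
have : pref legal_guided (s ++ rcons q a).
  apply: guided_ext => //; last by rewrite -rcons_cat -Ex.
  by apply: no_inner_mc_rcons; [apply: no_inner_mc_take | rewrite -Ex].
by rewrite -rcons_cat -Ex; case=> v Hv; exists v; right.
Qed.

Lemma J_controllable : controllable uc J L.
Proof.
move=> x a [z [HJ|HJ]] Ha HL; last first.
  by apply: legal_guided_controllable => //; exists z.
by apply: J_of_Kup; apply: (@supC_controllable _ uc K L) => //; exists z.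
Qed.

Lemma M'_first_letter_in_Kup a t : M' (a :: t) -> pref Kup (rcons s a).
Proof.
move=> HM; have Ha : pref M' [:: a] by exists t.
rewrite -cats1; apply: (supC_greatest J_sub J_controllable).
have [v Hv] : pref legal_guided (s ++ [:: a]).
  apply: guided_ext; [exact: guided_of_pref | by move=> n /=; lia | exact: target_pref_K].
by exists v; right.
Qed.

End Guided.

End LLP.

Theorem theorem11 (Sigma : finType) (uc : pred Sigma) (Lm K : lang Sigma)
  (HKsub : subl K Lm)
  (HKclosed : forall s, K s <-> (pref K s /\ Lm s))
  (HKup : exists s, supC uc K (pref Lm) s)
  (Nm N : nat) (HNm : is_Nmcf uc (pref Lm) K Nm) (HN : Nm + 1 <= N) :
  forall s, closed_loop (pref Lm) (gamma_optm uc (pref Lm) K N) s <->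
            pref (supC uc K (pref Lm)) s.
Proof.
move=> s; split.
- elim=> [|p a _ IHp HLa [[t [M' [Hsub [Hc HM]]]]|[Hua _]]].
  + by case: HKup => x Hx; exists x.
  + exact: (M'_first_letter_in_Kup HNm HN IHp Hsub Hc HM).
  + exact: supC_controllable.
- elim/last_ind: s => [_|p a IHp Hpa]; first exact: CL_nil.
  apply: CL_step.
  + by apply: IHp; apply: (pref_cat (y := [:: a])); rewrite cats1.
  + by case: (supC_pref Hpa) => w Hw; exists w; apply: HKsub.
  + by apply: Kup_enabled => //; lia.
Qed.
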